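(* If $\bar\alpha,\bar\beta\in\{0,1\}^k$ and $\bar\alpha\ne\bar\beta$, then $F_{\bar\alpha}\cap F_{\bar\beta}=\varnothing$, $$d_H(F_{\bar\alpha},F_{\bar\beta})<\frac{3\sqrt5}{5^{|\bar\alpha\wedge\bar\beta|}},\qquad d(F_{\bar\alpha},F_{\bar\beta})\ge\frac{1}{5^{|\bar\alpha\wedge\bar\beta|+1}}.$$
   Context: Let $I=[0,1]^3$. Let $\mathcal D_0=\{(i,2,2),(2,i,2),(2,2,i): i=0,1,2,3,4\}$ and $\mathcal D_1=\{d\in\{0,\ldots,4\}^3:\ \text{at least two coordinates of } d \text{ lie in }\{0,4\}\}$. For $i=0,1$ let $T_i(A)=\bigcup_{d\in\mathcal D_i}\frac{d+A}{5}$, and for $\bar\alpha=\alpha_1\cdots\alpha_k$ let $F_{\bar\alpha}=T_{\alpha_1}\circ\cdots\circ T_{\alpha_k}(I)$. $|\bar\alpha\wedge\bar\beta|$ denotes the length of the longest common initial segment of $\bar\alpha$ and $\bar\beta$. $d_H$ is the Hausdorff distance and $d(A,B)=\inf\{|a-b|:a\in A,b\in B\}$. *)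

From Stdlib Require Import Reals List.
From Coquelicot Require Import Coquelicot.
Open Scope R_scope.

Definition pt := (R * R * R)%type.
Definition pset := pt -> Prop.

Definition edist (p q : pt) : R :=
  let '(x1, y1, z1) := p in let '(x2, y2, z2) := q in
  sqrt ((x1 - x2)^2 + (y1 - y2)^2 + (z1 - z2)^2).

Definition cubeI : pset := fun p =>
  let '(x, y, z) := p in 0 <= x <= 1 /\ 0 <= y <= 1 /\ 0 <= z <= 1.

Definition D0 (d : nat * nat * nat) : Prop :=
  let '(a, b, c) := d in
  (a <= 4 /\ b = 2 /\ c = 2)%nat \/ (a = 2 /\ b <= 4 /\ c = 2)%nat
  \/ (a = 2 /\ b = 2 /\ c <= 4)%nat.

Definition in04 (n : nat) : Prop := n = 0%nat \/ n = 4%nat.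

Definition D1 (d : nat * nat * nat) : Prop :=
  let '(a, b, c) := d in
  (a <= 4 /\ b <= 4 /\ c <= 4)%nat /\
  ((in04 a /\ in04 b) \/ (in04 a /\ in04 c) \/ (in04 b /\ in04 c)).

Definition Dset (i : bool) := if i then D1 else D0.

Definition Tmap (i : bool) (A : pset) : pset := fun p =>
  exists a b c x y z, Dset i (a, b, c) /\ A (x, y, z) /\
    p = ((INR a + x) / 5, (INR b + y) / 5, (INR c + z) / 5).

(* Words alpha in {0,1}^k as lists of booleans (false = 0, true = 1);
   F_{a1...ak} = T_{a1} o ... o T_{ak} (I). *)
Fixpoint Fw (w : list bool) : pset :=
  match w with nil => cubeI | i :: w' => Tmap i (Fw w') end.

Fixpoint lcp (u v : list bool) : nat :=
  match u, v with
  | i :: u', j :: v' => if Bool.eqb i j then S (lcp u' v') else 0%nat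
  | _, _ => 0%nat
  end.

(* d(A,B) = inf { |a-b| : a in A, b in B }  (in Rbar; +oo if empty) *)
Definition setdist (A B : pset) : Rbar :=
  Glb_Rbar (fun r => exists a b, A a /\ B b /\ r = edist a b).

Definition hausdorff (A B : pset) : Rbar :=
  Glb_Rbar (fun e => 0 <= e /\
    (forall a, A a -> exists b, B b /\ edist a b <= e) /\
    (forall b, B b -> exists a, A a /\ edist a b <= e)).

From Stdlib Require Import Reals List Lra Lia.
From Coquelicot Require Import Coquelicot.
Open Scope R_scope.
Set Implicit Arguments.
Unset Strict Implicit.

(* Write the two words as [g ++ i :: w] and [g ++ j :: w'] with [i <> j] and
   [m = length g].  Upper bound: [T_0] and [T_1] are contractions by [1/5] that
   use the same translations on matching points, so by induction along [g] every
   point of [F_{g++w}] lies, coordinatewise, within [5^-m] of a point of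
   [F_{g++w'}]; the Euclidean distance is then at most [sqrt 3 * 5^-m].
   Lower bound: both sets are images of subsets of [T_i(I)] and [T_j(I)] under
   maps [x |-> (n + x) / 5^m] with integer vectors [n]; a point of [T_0(I)] has
   some coordinate in [[2/5,3/5]] where a point of [T_1(I)] has its coordinate in
   [[0,1/5] \/ [4/5,1]], and integer shifts cannot bring these closer than [1/5]. *)

Lemma Dset_bound i a b c : Dset i (a, b, c) -> (a <= 4 /\ b <= 4 /\ c <= 4)%nat.
Proof. destruct i; simpl; unfold in04; lia. Qed.

Lemma Dset_nonempty i : exists d, Dset i d.
Proof.
  destruct i; simpl.
  - exists (0, 0, 0)%nat; simpl; unfold in04; lia.
  - exists (2, 2, 2)%nat; simpl; lia.
Qed.

Lemma INR_le_4 n : (n <= 4)%nat -> 0 <= INR n <= 4.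
Proof.
  split; [apply pos_INR|].
  replace 4 with (INR 4) by (simpl; lra). apply le_INR; assumption.
Qed.

Lemma Tmap_cube i A p :
  (forall q, A q -> cubeI q) -> Tmap i A p -> cubeI p.
Proof.
  intros HA (a & b & c & x & y & z & HD & Hx & ->).
  apply HA in Hx; simpl in Hx.
  destruct (Dset_bound HD) as (Ha & Hb & Hc).
  apply INR_le_4 in Ha; apply INR_le_4 in Hb; apply INR_le_4 in Hc.
  simpl; lra.
Qed.

Lemma Tmap_nonempty i A : (exists q, A q) -> exists p, Tmap i A p.
Proof.
  intros [[[x y] z] Hx]. destruct (Dset_nonempty i) as [[[a b] c] HD].
  eexists; exists a, b, c, x, y, z; auto.
Qed.

Lemma Fw_cube w p : Fw w p -> cubeI p.
Proof.
  revert p; induction w as [|i w IH]; simpl; [auto|].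
  intro p; apply Tmap_cube, IH.
Qed.

Lemma Fw_nonempty w : exists p, Fw w p.
Proof.
  induction w as [|i w IH]; simpl.
  - exists (0, 0, 0); simpl; lra.
  - apply Tmap_nonempty, IH.
Qed.

Lemma edist_sym p q : edist p q = edist q p.
Proof. destruct p as [[? ?] ?], q as [[? ?] ?]; simpl; f_equal; ring. Qed.

Lemma edist_refl p : edist p p = 0.
Proof.
  destruct p as [[x y] z]; simpl.
  replace (_ + _ + _) with 0 by ring. apply sqrt_0.
Qed.

Lemma Rabs_div_diff x y s : 0 < s -> Rabs (x / s - y / s) = Rabs (x - y) / s.
Proof.
  intro Hs. replace (x / s - y / s) with ((x - y) / s) by (field; lra).
  rewrite Rabs_div by lra. rewrite (Rabs_pos_eq s) by lra. reflexivity.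
Qed.

Definition near (e : R) (p q : pt) : Prop :=
  let '(p1, p2, p3) := p in let '(q1, q2, q3) := q in
  Rabs (p1 - q1) <= e /\ Rabs (p2 - q2) <= e /\ Rabs (p3 - q3) <= e.

Definition covers (e : R) (A B : pset) : Prop :=
  forall p, A p -> exists q, B q /\ near e p q.

Lemma covers_cube A B :
  (forall p, A p -> cubeI p) -> (forall q, B q -> cubeI q) -> (exists q, B q) ->
  covers 1 A B.
Proof.
  intros HA HB [q Hq] p Hp. exists q; split; [exact Hq|].
  apply HA in Hp; apply HB in Hq.
  destruct p as [[p1 p2] p3], q as [[q1 q2] q3]; simpl in *.
  repeat split; apply Rabs_le; lra.
Qed.

Lemma Tmap_covers i e A B : covers e A B -> covers (e / 5) (Tmap i A) (Tmap i B).
Proof.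
  intros HAB p (a & b & c & x & y & z & HD & Hx & ->).
  destruct (HAB _ Hx) as ([[x' y'] z'] & Hy & H1 & H2 & H3).
  exists ((INR a + x') / 5, (INR b + y') / 5, (INR c + z') / 5). split.
  - exists a, b, c, x', y', z'; auto.
  - simpl; rewrite !Rabs_div_diff by lra.
    replace (INR a + x - (INR a + x')) with (x - x') by ring.
    replace (INR b + y - (INR b + y')) with (y - y') by ring.
    replace (INR c + z - (INR c + z')) with (z - z') by ring.
    repeat split; lra.
Qed.

Lemma Fw_app_covers g w w' :
  covers (/ 5 ^ length g) (Fw (g ++ w)) (Fw (g ++ w')).
Proof.
  induction g as [|i g IH]; simpl.
  - rewrite Rinv_1. apply covers_cube; [apply Fw_cube | apply Fw_cube | apply Fw_nonempty].
  - rewrite Rinv_mult, Rmult_comm. apply Tmap_covers, IH.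
Qed.

Lemma edist_near e p q : near e p q -> edist p q <= sqrt 3 * e.
Proof.
  destruct p as [[p1 p2] p3], q as [[q1 q2] q3]; simpl.
  intros (H1 & H2 & H3).
  assert (He : 0 <= e) by (pose proof (Rabs_pos (p1 - q1)); lra).
  rewrite <- (sqrt_Rsqr e), <- sqrt_mult_alt by lra.
  apply sqrt_le_1_alt. unfold Rsqr.
  apply Rabs_le_between in H1; apply Rabs_le_between in H2; apply Rabs_le_between in H3.
  nra.
Qed.

Lemma hausdorff_le_covers e A B : 0 <= e ->
  covers e A B -> covers e B A -> Rbar_le (hausdorff A B) (sqrt 3 * e).
Proof.
  intros He HAB HBA. apply (proj1 (Glb_Rbar_correct _)).
  split; [|split].
  - apply Rmult_le_pos; [apply sqrt_pos | exact He].
  - intros a Ha. destruct (HAB a Ha) as (b & Hb & Hab).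
    exists b; split; [exact Hb | exact (edist_near Hab)].
  - intros b Hb. destruct (HBA b Hb) as (a & Ha & Hba).
    exists a; split; [exact Ha|]. rewrite edist_sym. exact (edist_near Hba).
Qed.

Definition middle_fifth (u : R) : Prop := 2 / 5 <= u <= 3 / 5.
Definition outer_fifths (v : R) : Prop := 0 <= v <= 1 / 5 \/ 4 / 5 <= v <= 1.

Definition separated (x y : pt) : Prop :=
  let '(x1, x2, x3) := x in let '(y1, y2, y3) := y in
  (middle_fifth x1 /\ outer_fifths y1) \/ (middle_fifth x2 /\ outer_fifths y2) \/
  (middle_fifth x3 /\ outer_fifths y3).

(* A digit of [D_0] has two coordinates equal to [2]; a digit of [D_1] has two
   coordinates in [{0,4}]; so they meet in a coordinate that is [2] on one side
   and [0] or [4] on the other. *)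
Lemma Tmap_separated A B x y :
  (forall p, A p -> cubeI p) -> (forall q, B q -> cubeI q) ->
  Tmap false A x -> Tmap true B y -> separated x y.
Proof.
  intros HA HB (a & b & c & x1 & x2 & x3 & HD & Hx & ->)
    (a' & b' & c' & y1 & y2 & y3 & HD' & Hy & ->).
  apply HA in Hx; apply HB in Hy; simpl in Hx, Hy, HD, HD'.
  unfold in04 in HD'; destruct HD' as [_ HD'].
  destruct HD as [(_ & -> & ->) | [(-> & _ & ->) | (-> & -> & _)]];
  destruct HD' as [[[-> | ->] [-> | ->]] | [[[-> | ->] [-> | ->]] | [[-> | ->] [-> | ->]]]];
  simpl; unfold middle_fifth, outer_fifths; lra.
Qed.

Lemma shifted_fifths_gap (n m : nat) u v :
  middle_fifth u -> outer_fifths v -> 1 / 5 <= Rabs ((INR n + u) - (INR m + v)).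
Proof.
  unfold middle_fifth, outer_fifths; intros Hu Hv.
  destruct (Compare_dec.lt_eq_lt_dec n m) as [[Hnm | <-] | Hmn].
  - assert (INR n + 1 <= INR m) by (rewrite <- S_INR; apply le_INR; lia).
    rewrite Rabs_left1; lra.
  - replace (INR n + u - (INR n + v)) with (u - v) by ring.
    destruct Hv; [rewrite Rabs_pos_eq | rewrite Rabs_left1]; lra.
  - assert (INR m + 1 <= INR n) by (rewrite <- S_INR; apply le_INR; lia).
    rewrite Rabs_pos_eq; lra.
Qed.

Definition shrink (m : nat) (n : nat * nat * nat) (x : pt) : pt :=
  let '(n1, n2, n3) := n in let '(x1, x2, x3) := x in
  ((INR n1 + x1) / 5 ^ m, (INR n2 + x2) / 5 ^ m, (INR n3 + x3) / 5 ^ m).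

Lemma Fw_app_shrink g w p :
  Fw (g ++ w) p -> exists n x, Fw w x /\ p = shrink (length g) n x.
Proof.
  revert p; induction g as [|i g IH]; simpl; intros p Hp.
  - exists (0, 0, 0)%nat, p; split; [exact Hp|].
    destruct p as [[x y] z]; simpl; f_equal; [f_equal|]; field.
  - destruct Hp as (a & b & c & y1 & y2 & y3 & _ & Hy & ->).
    destruct (IH _ Hy) as ([[n1 n2] n3] & [[x1 x2] x3] & Hx & E).
    simpl in E; injection E as -> -> ->.
    exists (a * 5 ^ length g + n1, b * 5 ^ length g + n2, c * 5 ^ length g + n3)%nat,
      (x1, x2, x3).
    split; [exact Hx|].
    assert (Hs : 5 ^ length g <> 0) by (apply pow_nonzero; lra).
    simpl; rewrite !plus_INR, !mult_INR, !pow_INR. replace (INR 5) with 5 by (simpl; lra).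
    f_equal; [f_equal|]; field; exact Hs.
Qed.

Lemma edist_ge_coords p1 p2 p3 q1 q2 q3 :
  Rabs (p1 - q1) <= edist (p1, p2, p3) (q1, q2, q3) /\
  Rabs (p2 - q2) <= edist (p1, p2, p3) (q1, q2, q3) /\
  Rabs (p3 - q3) <= edist (p1, p2, p3) (q1, q2, q3).
Proof.
  simpl. rewrite <- (sqrt_Rsqr_abs (p1 - q1)), <- (sqrt_Rsqr_abs (p2 - q2)),
    <- (sqrt_Rsqr_abs (p3 - q3)).
  pose proof (Rle_0_sqr (p1 - q1)); pose proof (Rle_0_sqr (p2 - q2));
    pose proof (Rle_0_sqr (p3 - q3)).
  unfold Rsqr in *; repeat split; apply sqrt_le_1_alt; lra.
Qed.

Lemma edist_shrink_separated m n n' x y :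
  separated x y -> 1 / 5 ^ S m <= edist (shrink m n x) (shrink m n' y).
Proof.
  assert (Hs : 0 < 5 ^ m) by (apply pow_lt; lra).
  assert (Hgap : forall (k k' : nat) u v, middle_fifth u -> outer_fifths v ->
    1 / 5 ^ S m <= Rabs ((INR k + u) / 5 ^ m - (INR k' + v) / 5 ^ m)).
  { intros k k' u v Hu Hv. rewrite Rabs_div_diff by exact Hs.
    replace (1 / 5 ^ S m) with ((1 / 5) / 5 ^ m) by (simpl; field; lra).
    apply Rmult_le_compat_r; [apply Rlt_le, Rinv_0_lt_compat, Hs|].
    apply shifted_fifths_gap; assumption. }
  destruct n as [[n1 n2] n3], n' as [[n1' n2'] n3'],
    x as [[x1 x2] x3], y as [[y1 y2] y3]; simpl shrink.
  destruct (edist_ge_coords ((INR n1 + x1) / 5 ^ m) ((INR n2 + x2) / 5 ^ m)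
    ((INR n3 + x3) / 5 ^ m) ((INR n1' + y1) / 5 ^ m) ((INR n2' + y2) / 5 ^ m)
    ((INR n3' + y3) / 5 ^ m)) as (E1 & E2 & E3).
  intros [[Hu Hv] | [[Hu Hv] | [Hu Hv]]]; eapply Rle_trans; eauto.
Qed.

Lemma Fw_branch_edist_ge g w w' p q :
  Fw (g ++ false :: w) p -> Fw (g ++ true :: w') q ->
  1 / 5 ^ S (length g) <= edist p q.
Proof.
  intros Hp Hq.
  destruct (Fw_app_shrink Hp) as (n & x & Hx & ->).
  destruct (Fw_app_shrink Hq) as (n' & y & Hy & ->).
  apply edist_shrink_separated.
  apply (Tmap_separated (@Fw_cube w) (@Fw_cube w') Hx Hy).
Qed.

Lemma Fw_neq_branch_edist_ge g i j w w' p q : i <> j ->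
  Fw (g ++ i :: w) p -> Fw (g ++ j :: w') q -> 1 / 5 ^ S (length g) <= edist p q.
Proof.
  intros Hij Hp Hq; destruct i, j; try congruence.
  - rewrite edist_sym; exact (Fw_branch_edist_ge Hq Hp).
  - exact (Fw_branch_edist_ge Hp Hq).
Qed.

Lemma disjoint_of_edist_ge e A B : 0 < e ->
  (forall a b, A a -> B b -> e <= edist a b) -> forall p, ~ (A p /\ B p).
Proof.
  intros He H p [Hp Hq]. specialize (H p p Hp Hq). rewrite edist_refl in H. lra.
Qed.

Lemma setdist_ge e A B :
  (forall a b, A a -> B b -> e <= edist a b) -> Rbar_le e (setdist A B).
Proof.
  intro H. apply (proj2 (Glb_Rbar_correct _)).
  intros r (a & b & Ha & Hb & ->). exact (H a b Ha Hb).
Qed.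

Lemma split_at_first_difference (al be : list bool) :
  length al = length be -> al <> be ->
  exists g i j w w', i <> j /\ al = g ++ i :: w /\ be = g ++ j :: w'.
Proof.
  revert be; induction al as [|x al IH]; intros [|y be] Hl Hne;
    simpl in Hl; try discriminate; [congruence|].
  destruct (Bool.bool_dec x y) as [<- | Hxy].
  - assert (Hne' : al <> be) by congruence.
    destruct (IH be ltac:(lia) Hne') as (g & i & j & w & w' & Hij & -> & ->).
    exists (x :: g), i, j, w, w'; auto.
  - exists nil, x, y, al, be; auto.
Qed.

Lemma lcp_app_neq g i j w w' : i <> j -> lcp (g ++ i :: w) (g ++ j :: w') = length g.
Proof.
  intro Hij; induction g as [|x g IH]; simpl.
  - destruct i, j; simpl; congruence.
  - rewrite Bool.eqb_reflx, IH; reflexivity.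
Qed.

Theorem lemma2 (k : nat) (al be : list bool) :
  length al = k -> length be = k -> al <> be ->
  (forall p, ~ (Fw al p /\ Fw be p)) /\
  Rbar_lt (hausdorff (Fw al) (Fw be)) (Finite (3 * sqrt 5 / 5 ^ (lcp al be))) /\
  Rbar_le (Finite (1 / 5 ^ (S (lcp al be)))) (setdist (Fw al) (Fw be)).
Proof.
  intros Ha Hb Hne.
  destruct (split_at_first_difference (eq_trans Ha (eq_sym Hb)) Hne)
    as (g & i & j & w & w' & Hij & -> & ->).
  rewrite lcp_app_neq by exact Hij.
  pose proof (fun p q => @Fw_neq_branch_edist_ge g i j w w' p q Hij) as Hdist.
  assert (Hs : 0 < 5 ^ length g) by (apply pow_lt; lra).
  split; [|split].
  - apply (disjoint_of_edist_ge (e := 1 / 5 ^ S (length g))); [|exact Hdist].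
    apply Rdiv_lt_0_compat; [lra | apply pow_lt; lra].
  - eapply Rbar_le_lt_trans.
    + apply hausdorff_le_covers; [apply Rlt_le, Rinv_0_lt_compat, Hs | apply Fw_app_covers ..].
    + simpl. apply Rmult_lt_compat_r; [apply Rinv_0_lt_compat, Hs|].
      assert (sqrt 3 < sqrt 5) by (apply sqrt_lt_1_alt; lra).
      assert (0 < sqrt 5) by (apply sqrt_lt_R0; lra).
      lra.
  - exact (setdist_ge Hdist).
Qed.
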